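(* In the setting described in the context, assume A1, A2 and A3. Suppose there exist a fixed subset $\mathcal K^*\subseteq\{1,\dots,K\}$ and a constant $\delta>0$ such that $\inf_{\mathbf w\in\mathcal W^*}\sum_{k\in\mathcal K^*}w_k\ge\frac12+\delta$ and $$\limsup_{n\to\infty}\Pr\Big(\bigcup_{k\in\mathcal K^*}\{Y\notin\mathcal C_k(\mathbf X;\mathcal D_n)\}\Big)\le\alpha.$$ Then $\liminf_{n\to\infty}\Pr\big(Y\in\mathcal C_{\mathrm{comb}}(\mathbf X;\mathcal D_n)\big)\ge1-\alpha$.
   Context: Setting: fix $K\ge2$ and $\alpha\in(0,1)$. For each sample size $n$, on a common probability space there are a random data set $\mathcal D_n$ and a random test pair $(\mathbf X,Y)$ with $\mathbf X\in\mathcal X\subseteq\mathbb R^p$, $Y\in\mathbb R$. For each $k\in\{1,\dots,K\}$ there is a random prediction set $\mathcal C_k(\mathbf X;\mathcal D_n)\subseteq\mathbb R$, determined by $\mathcal D_n$ and $\mathbf X$, such that the events $\{Y\in\mathcal C_k(\mathbf X;\mathcal D_n)\}$ are measurable. Let $\Delta^{K-1}=\{\mathbf w\in[0,1]^K:w_k\ge0,\sum_k w_k=1\}$ and let $\widehat{\mathbf w}_n=(\widehat w_{n,1},\dots,\widehat w_{n,K})$ be a $\sigma(\mathcal D_n)$-measurable random vector in $\Delta^{K-1}$. Let $\mathcal W^*\subseteq\Delta^{K-1}$ be a nonempty closed convex set; $\|\cdot\|$ is the Euclidean norm. A1: for every $n$ and every $k$, $\Pr(Y\notin\mathcal C_k(\mathbf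 X;\mathcal D_n)\mid\mathcal D_n)\le\alpha$ almost surely. A2: $\inf_{\mathbf w\in\mathcal W^*}\|\widehat{\mathbf w}_n-\mathbf w\|\to0$ in probability as $n\to\infty$. A3: $\mathcal C_{\mathrm{comb}}(\mathbf X;\mathcal D_n):=\{y\in\mathbb R:\sum_{k=1}^K\widehat w_{n,k}\mathbf 1\{y\in\mathcal C_k(\mathbf X;\mathcal D_n)\}>1/2\}$. *)

From HB Require Import structures.
From mathcomp Require Import all_boot all_order all_algebra.
From mathcomp Require Import all_classical all_reals all_analysis.
Set Implicit Arguments. Unset Strict Implicit. Unset Printing Implicit Defensive.
Import Order.TTheory GRing.Theory Num.Theory numFieldNormedType.Exports.
Local Open Scope classical_set_scope.
Local Open Scope ring_scope.

Definition simplex (R : realType) (K : nat) : set 'rV[R]_K :=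
  [set w | (forall k, 0 <= w 0 k) /\ \sum_(k < K) w 0 k = 1].

Definition convex_wset (R : realType) (K : nat) (W : set 'rV[R]_K) : Prop :=
  forall u v t, W u -> W v -> 0 <= t <= 1 ->
    W (t *: u + (1 - t) *: v).

Definition eucl_dist (R : realType) (K : nat) (u v : 'rV[R]_K) : R :=
  Num.sqrt (\sum_(k < K) (u 0 k - v 0 k) ^+ 2).

Definition dist_to (R : realType) (K : nat) (W : set 'rV[R]_K) (u : 'rV[R]_K) : R :=
  inf [set eucl_dist u w | w in W].

From HB Require Import structures.
From mathcomp Require Import all_boot all_order all_algebra.
From mathcomp Require Import all_classical all_reals all_analysis.
From mathcomp Require Import lra.
Import Order.TTheory GRing.Theory Num.Theory numFieldNormedType.Exports.
Local Open Scope classical_set_scope.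
Local Open Scope ring_scope.
Set Implicit Arguments. Unset Strict Implicit.

(** Outside two bad events the combined set covers [Y]: if no member of
    [Kstar] misses [Y] and the estimated weights are within [delta / K] of
    [Wstar], then the members of [Kstar] alone carry weight above [1/2] and
    all of them vote for [Y]. The first event has limsup probability at most
    [alpha] by assumption and the second has vanishing probability by
    consistency of the weights, so bounding [P (Y in C_comb)] below by one
    minus the probabilities of the two events bounds the liminf.
    Measurability of the second event comes from the Lipschitz continuity of
    the distance to [Wstar], which lets one cover its superlevel sets by
    countably many rational coordinate boxes. *)

Section EuclideanDistance.
Variables (R : realType) (K : nat).
Implicit Types (a b : 'I_K -> R) (u v w : 'rV[R]_K) (W : set 'rV[R]_K).

Lemma ler_sum_pred (I : finType) (A : pred I) (F : I -> R) :
  (forall i, ~~ A i -> 0 <= F i) -> \sum_(i | A i) F i <= \sum_i F i.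
Proof.
move=> F0; rewrite [leRHS](bigID A) /= lerDl.
by apply: sumr_ge0 => i; exact: F0.
Qed.

Lemma sum_le_card_mul a (c : R) : (forall k, a k <= c) -> \sum_(k < K) a k <= K%:R * c.
Proof.
move=> ac; apply: le_trans (ler_sum _ (fun k _ => ac k)) _.
by rewrite sumr_const card_ord mulr_natl.
Qed.

Definition l1_lipschitz (f : 'rV[R]_K -> R) :=
  forall u v, f u <= f v + \sum_(k < K) `|u 0 k - v 0 k|.

Lemma normr_le_sqrt_sum_sqr a j : `|a j| <= Num.sqrt (\sum_(k < K) a k ^+ 2).
Proof.
rewrite -sqrtr_sqr ler_wsqrtr// (bigD1 j)//= lerDl.
by apply: sumr_ge0 => k _; exact: sqr_ge0.
Qed.

Lemma sqrt_sum_sqrD_le a b :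
  Num.sqrt (\sum_(k < K) (a k + b k) ^+ 2) <=
  Num.sqrt (\sum_(k < K) a k ^+ 2) + \sum_(k < K) `|b k|.
Proof.
set x := Num.sqrt (\sum_(k < K) a k ^+ 2); set S := \sum_(k < K) `|b k|.
have x0 : 0 <= x by exact: sqrtr_ge0.
have S0 : 0 <= S by exact: sumr_ge0.
have bS k : `|b k| <= S by rewrite /S (bigD1 k)//= lerDl sumr_ge0.
have termwise k : (a k + b k) ^+ 2 <= a k ^+ 2 + (x *+ 2 * `|b k| + S * `|b k|).
  rewrite sqrrD -addrA lerD2l; apply: lerD.
    rewrite mulrnAl ler_wMn2r// (le_trans (ler_norm _))// normrM.
    by rewrite ler_wpM2r//; exact: normr_le_sqrt_sum_sqr.
  by rewrite -real_normK ?num_real// expr2 ler_wpM2r.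
have -> : x + S = Num.sqrt ((x + S) ^+ 2) by rewrite sqrtr_sqr ger0_norm ?addr_ge0.
rewrite ler_wsqrtr// sqrrD sqr_sqrtr ?sumr_ge0// => [|k _]; last exact: sqr_ge0.
apply: le_trans (ler_sum _ (fun k _ => termwise k)) _.
by rewrite !big_split /= -!mulr_sumr -/S -addrA lerD2l mulrnAl -mulrnAr expr2.
Qed.

Lemma normr_le_eucl_dist u w k : `|u 0 k - w 0 k| <= eucl_dist u w.
Proof. exact: (normr_le_sqrt_sum_sqr (fun k => u 0 k - w 0 k)). Qed.

Lemma sum_normr_le_eucl_dist u w :
  \sum_(k < K) `|u 0 k - w 0 k| <= K%:R * eucl_dist u w.
Proof. exact/sum_le_card_mul/normr_le_eucl_dist. Qed.

Lemma eucl_dist_le_l1 u v w :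
  eucl_dist u w <= eucl_dist v w + \sum_(k < K) `|u 0 k - v 0 k|.
Proof.
rewrite /eucl_dist (eq_bigr (fun k => ((v 0 k - w 0 k) + (u 0 k - v 0 k)) ^+ 2)).
  exact: (sqrt_sum_sqrD_le (fun k => v 0 k - w 0 k) (fun k => u 0 k - v 0 k)).
by move=> k _; rewrite [_ + (u 0 k - _)]addrC subrKA.
Qed.

Lemma dist_to_le_eucl_dist W u w : W w -> dist_to W u <= eucl_dist u w.
Proof.
move=> Ww; apply: ge_inf; last by exists w.
by exists 0 => _ [w' _ <-]; exact: sqrtr_ge0.
Qed.

Lemma dist_to_l1_lipschitz W : W !=set0 -> l1_lipschitz (dist_to W).
Proof.
move=> [w0 Ww0] u v; rewrite -lerBlDr; apply: lb_le_inf; first by exists (eucl_dist v w0), w0.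
move=> _ [w Ww <-]; rewrite lerBlDr.
exact: le_trans (dist_to_le_eucl_dist u Ww) (eucl_dist_le_l1 u v w).
Qed.

Lemma dist_to_ltP W u e : W !=set0 -> dist_to W u < e ->
  exists2 w, W w & eucl_dist u w < e.
Proof.
move=> [w0 Ww0] /inf_lt[]; first by exists (eucl_dist u w0), w0.
by move=> _ [w Ww <-]; exists w.
Qed.


Lemma sum_in_lt_of_dist_to W (A : {set 'I_K}) (c delta : R) u :
  (0 < K)%N -> W !=set0 -> (forall w, W w -> c + delta <= \sum_(k in A) w 0 k) ->
  dist_to W u < delta / K%:R -> c < \sum_(k in A) u 0 k.
Proof.
move=> K0 W0 massW /(dist_to_ltP W0)[w Ww uw].
have close : \sum_(k in A) w 0 k - \sum_(k in A) u 0 k < delta.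
  rewrite -sumrB; apply: (@le_lt_trans _ _ (K%:R * eucl_dist u w)).
    apply: le_trans (sum_normr_le_eucl_dist u w).
    apply: le_trans (ler_sum_pred (A := fun k => k \in A)
      (F := fun k => `|u 0 k - w 0 k|) (fun k _ => normr_ge0 _)).
    by apply: ler_sum => k _; rewrite distrC ler_norm.
  by rewrite mulrC -ltr_pdivlMr ?ltr0n.
by have := massW w Ww; lra.
Qed.

Lemma sum_in_le_weighted_vote (A : {set 'I_K}) a (S : 'I_K -> set R) (y : R) :
  (forall k, 0 <= a k) -> (forall k, k \in A -> S k y) ->
  \sum_(k in A) a k <= \sum_(k < K) a k * \1_(S k) y.
Proof.
move=> a0 cover.
rewrite (eq_bigr (fun k => a k * \1_(S k) y)) => [|k kA]; last first.
  by rewrite indicE mem_set ?mulr1 //; exact: cover.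
by apply: ler_sum_pred => k _; rewrite mulr_ge0 // indicE.
Qed.

Lemma rat_ball_in_superlevel (f : 'rV[R]_K -> R) (eps : R) (x : 'rV[R]_K) :
  l1_lipschitz f -> eps < f x ->
  exists (q : 'rV[rat]_K) (r : rat), [/\ 0 < r, eps + K%:R * ratr r < f (map_mx ratr q)
    & forall k, `|x 0 k - map_mx ratr q 0 k| < ratr r].
Proof.
move=> lipf epsx; set D := f x - eps.
have D0 : 0 < D by rewrite subr_gt0.
(* [K.+1] rather than [K] keeps the radius positive when [K = 0]. *)
have [r] := @rat_in_itvoo R 0 (D / (2 * K.+1%:R)) ltac:(by rewrite divr_gt0 ?mulr_gt0).
rewrite in_itv /= => /andP[r0 rD].
have hq k : exists q : rat, ratr q \in `](x 0 k) - ratr r, x 0 k + ratr r[.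
  by apply: rat_in_itvoo; rewrite ltrD2l gtrN.
pose q := \row_k xchoose (hq k).
have qx k : `|x 0 k - map_mx ratr q 0 k| < ratr r.
  by rewrite !mxE ltr_distlC; have := xchooseP (hq k); rewrite in_itv.
exists q, r; split => //; first by rewrite -(ltr0q R).
have := lipf x (map_mx ratr q).
have : \sum_(k < K) `|x 0 k - map_mx ratr q 0 k| <= K%:R * ratr r.
  by apply: sum_le_card_mul => k; exact: ltW.
have : ratr r * (2 * K.+1%:R) < D by rewrite -ltr_pdivlMr ?mulr_gt0.
rewrite -natr1 /D; nra.
Qed.

End EuclideanDistance.

Section MeasurableSuperlevel.
Context d (T : measurableType d) (R : realType).

Lemma measurable_fun_preimage (h : T -> R) (B : set R) :
  measurable_fun setT h -> measurable B -> measurable (h @^-1` B).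
Proof. by move=> mh mB; rewrite -[_ @^-1` _]setTI; exact: mh. Qed.

Lemma measurable_fun_gt (h : T -> R) (c : R) :
  measurable_fun setT h -> measurable [set t | c < h t].
Proof.
move=> /measurable_fun_preimage/(_ (measurable_itv `]c, +oo[)).
by congr measurable; apply/seteqP; split => t /=; rewrite in_itv/= andbT.
Qed.

Variables (K : nat) (v : T -> 'rV[R]_K).
Hypothesis mv : forall k, measurable_fun setT (fun t => v t 0 k).

Lemma measurable_coord_ball (c : 'rV[R]_K) (r : R) :
  measurable [set t | forall k, `|v t 0 k - c 0 k| < r].
Proof.
have -> : [set t | forall k, `|v t 0 k - c 0 k| < r] =
    \bigcap_(k in [set: 'I_K]) ((fun t => v t 0 k) @^-1` `]c 0 k - r, c 0 k + r[).
  apply/seteqP; split => t /= vt k.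
    by move=> _ /=; rewrite in_itv/= -ltr_distl.
  by have := vt k I; rewrite /= in_itv/= -ltr_distl.
apply: fin_bigcap_measurable; first exact: finite_finset.
by move=> k _; apply: measurable_fun_preimage; [exact: mv | exact: measurable_itv].
Qed.

Lemma measurable_l1_lipschitz_gt (f : 'rV[R]_K -> R) (eps : R) :
  l1_lipschitz f -> measurable [set t | eps < f (v t)].
Proof.
move=> lipf.
pose F (i : 'rV[rat]_K * rat) :=
  if (0 < i.2) && (eps + K%:R * ratr i.2 < f (map_mx ratr i.1))
  then [set t | forall k, `|v t 0 k - map_mx ratr i.1 0 k| < ratr i.2] else set0.
have -> : [set t | eps < f (v t)] = \bigcup_i F i.
  apply/seteqP; split => t /=.
    move=> /(rat_ball_in_superlevel lipf)[q [r [r0 qr vq]]].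
    by exists (q, r) => //; rewrite /F /= r0 qr.
  move=> [[q r] _]; rewrite /F /=; case: ifP => // /andP[_ qr] vq.
  have := lipf (map_mx ratr q) (v t).
  have : \sum_(k < K) `|map_mx ratr q 0 k - v t 0 k| <= K%:R * ratr r.
    by apply: sum_le_card_mul => k; rewrite distrC; exact: ltW.
  lra.
apply: countable_bigcupT_measurable => [|i]; first exact: countableP.
by rewrite /F; case: ifP => _ //; exact: measurable_coord_ball.
Qed.

End MeasurableSuperlevel.

Section LimitsOfProbabilities.
Context (R : realType).
Local Open Scope ereal_scope.

Lemma limn_esup_lt_near (u : (\bar R)^nat) (l : \bar R) :
  limn_esup u < l -> \forall n \near \oo, u n < l.
Proof.
move=> /ereal_inf_lt[_ [V FV <-]] supV; apply: filterS FV => n Vn.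
by apply: le_lt_trans supV; apply: ereal_sup_ubound; exists n.
Qed.

Lemma limn_einf_ge_near (u : (\bar R)^nat) (l : R) :
  (forall e : R, (0 < e)%R -> \forall n \near \oo, (l - e)%:E <= u n) ->
  l%:E <= limn_einf u.
Proof.
move=> ul; rewrite /limn_einf leeNr; apply/lee_addgt0Pr => e e0.
apply: le_trans (ereal_inf_lbound _) _.
  by exists [set n | (l - e)%:E <= u n]; [exact: ul|].
apply: ge_ereal_sup => _ [n /= lun <-].
by rewrite leeNl -EFinD -EFinN opprD opprK.
Qed.

Context d (T : measurableType d) (P : probability T R).

Lemma probability_setCI_ge (U B : set T) : measurable U -> measurable B ->
  1 - (P U + P B) <= P (~` U `&` ~` B).
Proof.
move=> mU mB; rewrite -setCU probability_setC; last exact: measurableU.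
by apply: leeB => //; exact: measureU2.
Qed.

Lemma limn_einf_probability_ge (A U B : nat -> set T) (a : R) :
  (forall n, measurable (A n)) -> (forall n, measurable (U n)) ->
  (forall n, measurable (B n)) -> (forall n, ~` U n `&` ~` B n `<=` A n) ->
  limn_esup (P \o U) <= a%:E -> (P \o B) @ \oo --> 0 ->
  (1 - a)%:E <= limn_einf (P \o A).
Proof.
move=> mA mU mB UBA supU /fine_cvgP[_ /cvgr_lt limB].
apply: limn_einf_ge_near => e e0.
have e2 : (0 < e / 2)%R by rewrite divr_gt0.
have supU_lt : limn_esup (P \o U) < (a + e / 2)%:E.
  by rewrite (le_lt_trans supU)// lte_fin ltrDl.
near=> n.
have UBn : 1 - (P (U n) + P (B n)) <= P (A n).
  apply: le_trans (probability_setCI_ge (mU n) (mB n)) _.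
  apply: le_measure; rewrite ?inE; last exact: UBA.
    by apply: measurableI; exact: measurableC.
  exact: mA.
apply: le_trans UBn.
have Un : P (U n) < (a + e / 2)%:E by near: n; exact: limn_esup_lt_near.
have Bn : (fine (P (B n)) < e / 2)%R by near: n; exact: limB.
rewrite -(fineK (fin_num_measure P _ (mU n))) -(fineK (fin_num_measure P _ (mB n))) in Un *.
by rewrite -EFinD lee_fin; rewrite lte_fin in Un; lra.
Unshelve. all: by end_near.
Qed.

End LimitsOfProbabilities.

Unset Implicit Arguments.
Theorem theorem2
  (R : realType) (d dD : measure_display)
  (T : measurableType d)            (* the common probability space *)
  (DT : measurableType dD)          (* space of data sets *)
  (P : probability T R)
  (K p : nat) (alpha : R)
  (Dn : nat -> T -> DT)                               (* data set D_n *)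
  (Xsp : set 'rV[R]_p)                               (* the feature space cal X *)
  (X : T -> 'rV[R]_p) (Y : T -> R)                    (* test pair *)
  (C : nat -> 'I_K -> DT -> 'rV[R]_p -> set R)        (* C_k(x; D) for sample size n *)
  (g : nat -> DT -> 'rV[R]_K)                        (* w_hat_n = g n (D_n) *)
  (Wstar : set 'rV[R]_K)
  (Kstar : {set 'I_K}) (delta : R) :
  (2 <= K)%N -> 0 < alpha < 1 ->
  (forall n, measurable_fun setT (Dn n)) ->
  (forall om, Xsp (X om)) ->
  (* the coverage events are measurable *)
  (forall n k, measurable [set om | C n k (Dn n om) (X om) (Y om)]) ->
  (* w_hat_n is sigma(D_n)-measurable and simplex-valued *)
  (forall n k, measurable_fun setT (fun D => g n D 0 k)) ->
  (forall n om, simplex (g n (Dn n om))) ->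
  (* W* nonempty, closed, convex subset of the simplex *)
  Wstar !=set0 -> closed Wstar -> convex_wset Wstar -> Wstar `<=` simplex (R:=R) (K:=K) ->
  (* A1: P(Y notin C_k | D_n) <= alpha a.s., stated via sigma(D_n)-events *)
  (forall n k (B : set DT), measurable B ->
     (P ([set om | ~ C n k (Dn n om) (X om) (Y om)] `&` (Dn n @^-1` B))
       <= alpha%:E * P (Dn n @^-1` B))%E) ->
  (* A2: dist(w_hat_n, W* ) -> 0 in probability *)
  (forall eps : R, 0 < eps ->
     (fun n => P [set om | eps < dist_to Wstar (g n (Dn n om))]) @ \oo --> 0%E) ->
  0 < delta ->
  (forall w, Wstar w -> 1 / 2 + delta <= \sum_(k in Kstar) w 0 k) ->
  (limn_esup (fun n => P [set om | exists2 k, k \in Kstar & ~ C n k (Dn n om) (X om) (Y om)])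
     <= alpha%:E)%E ->
  (* A3: C_comb and the conclusion *)
  ((1 - alpha)%:E <=
     limn_einf (fun n => P [set om |
        (1 / 2 < \sum_(k < K) g n (Dn n om) 0 k * \1_(C n k (Dn n om) (X om)) (Y om))%R]))%E.
Proof.
move=> K2 _ mDn _ mC mg simp W0 _ _ _ _ A2 delta0 massW supU.
have K0 : (0 < K)%N by exact: leq_trans K2.
have e0 : 0 < delta / (2 * K%:R) by rewrite divr_gt0 ?mulr_gt0 ?ltr0n.
have mw n k : measurable_fun setT (fun om => g n (Dn n om) 0 k).
  exact: measurableT_comp (mg n k) (mDn n).
apply: limn_einf_probability_ge supU (A2 _ e0) => [n|n|n|n om [/= notU notB]].
- apply/measurable_fun_gt/measurable_sum => k.
  apply: measurable_realfun.measurable_funM => //.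
  have -> : (fun om => \1_(C n k (Dn n om) (X om)) (Y om) : R) =
      \1_[set om | C n k (Dn n om) (X om) (Y om)] by apply/funext => om; rewrite !indicE.
  exact: measurable_realfun.measurable_indic.
- apply: fin_bigcup_measurable => [|k _]; first exact: finite_finset.
  exact/measurableC/mC.
- exact/measurable_l1_lipschitz_gt/dist_to_l1_lipschitz.
- apply: lt_le_trans (sum_in_le_weighted_vote (A := Kstar) _ _).
  + apply: (sum_in_lt_of_dist_to K0 W0 massW).
    apply: le_lt_trans (_ : _ <= delta / (2 * K%:R)) _; first by rewrite leNgt; exact/negP.
    by rewrite ltr_pM2l // ltf_pV2 ?posrE ?mulr_gt0 ?ltr0n // ltr_pMl ?ltr0n // ltr1n.
  + by case: (simp n om).
  + by move=> k kK; apply: contrapT => nC; apply: notU; exists k.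
Qed.
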